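(* Let $F:X\rightrightarrows Y$ be upper $K$-convex, let $\bar x\in X$, and suppose $F(\bar x)$ is $K$-sequentially compact and $D_Y$ is $K$-closed. Then $$\widehat\partial F(\bar x)=\{T\in B(X,Y)\mid F(x)\subset F(\bar x)+T(x-\bar x)+K \ \text{ for all } x\in X\}.$$
   Context: $X,Y$ are real normed spaces; $B(X,Y)$ is the space of bounded linear operators $X\to Y$; $B(x,\delta)$ is the open ball and $D_Y$ the closed unit ball of $Y$. $K\subset Y$ is a pointed closed convex cone. All set-valued maps have nonempty values. For $F:X\rightrightarrows Y$ and $\bar x\in X$, the Fréchet subdifferential $\widehat\partial F(\bar x)$ is the set of all $T\in B(X,Y)$ such that for every $\varepsilon>0$ there is $\delta>0$ with $F(x)+K\subset F(\bar x)+K+T(x-\bar x)+\varepsilon\|x-\bar x\|D_Y$ for all $x\in B(\bar x,\delta)$. $F:X\rightrightarrows Y$ is upper $K$-convex if $\lambda F(x)+(1-\lambda)F(y)\subset F(\lambda x+(1-\lambda)y)+K$ for all $x,y\in X$, $\lambda\in(0,1)$. A nonempty set $A\subset Y$ is $K$-sequentially compact if for every sequence $(a_n)\subset A$ there is a sequence $(c_n)\subset K$ such that $(a_n-c_n)$ has a subsequence converging to an element of $A$. A set $A$ is $K$-closed if $A+K$ is closed. *)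

From HB Require Import structures.
From mathcomp Require Import all_boot all_order all_algebra.
From mathcomp Require Import all_classical all_reals all_analysis.
Set Implicit Arguments. Unset Strict Implicit. Unset Printing Implicit Defensive.
Import Order.TTheory GRing.Theory Num.Theory.
Import numFieldNormedType.Exports.
Local Open Scope classical_set_scope.
Local Open Scope ring_scope.

Definition mink_sum (R : numDomainType) (V : lmodType R) (A B : set V) : set V :=
  [set a + b | a in A & b in B].

Definition set_transl (R : numDomainType) (V : lmodType R) (A : set V) (v : V) : set V :=
  [set a + v | a in A].

Definition set_scale (R : numDomainType) (V : lmodType R) (l : R) (A : set V) : set V :=
  [set l *: a | a in A].

Definition cball1 (R : numDomainType) (V : normedModType R) : set V :=
  [set y | `|y| <= 1].

Definition pointed_closed_convex_cone (R : realType) (Y : normedModType R)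
    (K : set Y) : Prop :=
  [/\ K 0,
      (forall l k, 0 <= l -> K k -> K (l *: k)),
      (forall k1 k2, K k1 -> K k2 -> K (k1 + k2)),
      (forall k, K k -> K (- k) -> k = 0) &
      closed K].

Definition upper_K_convex (R : realType) (X Y : normedModType R)
    (K : set Y) (F : X -> set Y) : Prop :=
  forall x y (l : R), 0 < l -> l < 1 ->
    mink_sum (set_scale l (F x)) (set_scale (1 - l) (F y))
      `<=` mink_sum (F (l *: x + (1 - l) *: y)) K.

Definition K_seq_compact (R : realType) (Y : normedModType R)
    (K : set Y) (A : set Y) : Prop :=
  A !=set0 /\
  forall a : nat -> Y, (forall n, A (a n)) ->
    exists c : nat -> Y, (forall n, K (c n)) /\
      exists phi : nat -> nat, {homo phi : m n / (m < n)%N >-> (m < n)%N} /\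
        exists2 l, A l & (fun n => a (phi n) - c (phi n)) @ \oo --> l.

Definition K_closed (R : realType) (Y : normedModType R) (K : set Y) (A : set Y)
  : Prop := closed (mink_sum A K).

Definition frechet_subdiff (R : realType) (X Y : normedModType R)
    (K : set Y) (F : X -> set Y) (xbar : X) (T : X -> Y) : Prop :=
  forall eps : R, 0 < eps -> exists2 delta : R, 0 < delta &
    forall x, `|x - xbar| < delta ->
      mink_sum (F x) K `<=`
        mink_sum (set_transl (mink_sum (F xbar) K) (T (x - xbar)))
             (set_scale (eps * `|x - xbar|) (@cball1 R Y)).

From HB Require Import structures.
From mathcomp Require Import all_boot all_order all_algebra.
From mathcomp Require Import all_classical all_reals all_analysis.
From mathcomp Require Import lra.
Import Order.TTheory GRing.Theory Num.Theory.
Import numFieldNormedType.Exports.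
Local Open Scope classical_set_scope.
Local Open Scope ring_scope.

(* Only the inclusion of the subdifferential in the right-hand side needs work.
   Fix y in F x, put h := x - xbar and z := y - T h; it suffices that z lies in
   F xbar + K.  For w in F xbar + K and small l > 0, upper K-convexity puts
   l y + (1 - l) w into F (xbar + l h) + K, and the Frechet estimate at
   xbar + l h brings this back into F xbar + K + l T h up to an error
   l eps |h|.  So some w' in F xbar + K satisfies
   |z - w'| <= (1 - l) |z - w| + l eps |h|, and iterating puts z arbitrarily
   close to F xbar + K, which is closed since F xbar is K-sequentially
   compact. *)

Section ConeSum.
Context {R : realType} {Y : normedModType R} {K : set Y}.
Hypothesis coneK : pointed_closed_convex_cone K.

Lemma K_seq_compact_K_closed {A : set Y} : K_seq_compact K A -> K_closed K A.
Proof.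
case: coneK => _ _ Kadd _ Kcl [_ Aseq] z clz.
have approx n : exists ak : Y * Y,
    [/\ A ak.1, K ak.2 & `|z - (ak.1 + ak.2)| < n.+1%:R^-1].
  have n0 : 0 < n.+1%:R^-1 :> R by rewrite invr_gt0.
  have [_ [[a Aa [k Kk <-]] zak]] := clz _ (nbhsx_ballx z _ n0).
  by exists (a, k); split=> //; move: zak; rewrite -ball_normE.
have [ak {}approx] := choice approx.
have [c [Kc [phi [phi_incr [l Al acl]]]]] :=
  Aseq (fun n => (ak n).1) (fun n => let: And3 Aa _ _ := approx n in Aa).
have phi_ge n : (n <= phi n)%N.
  by elim: n => // n ih; exact: leq_ltn_trans ih (phi_incr _ _ (ltnSn n)).
have akz : (fun n => (ak (phi n)).1 + (ak (phi n)).2) @ \oo --> z.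
  apply/cvgrPdist_lt => e e0; near=> n.
  have [_ _ /lt_le_trans] := approx (phi n); apply.
  apply: le_trans (ltW (_ : n.+1%:R^-1 < e)); last first.
    by near: n; exact: (near_infty_natSinv_lt (PosNum e0)).
  by rewrite lef_pV2 ?posrE // ler_nat ltnS.
have kcl : (fun n => (ak (phi n)).2 + c (phi n)) @ \oo --> z - l.
  apply: cvg_trans (cvgB akz acl); apply: near_eq_cvg; near=> n.
  by rewrite opprB addrC addrA subrK addrC.
have Kzl : K (z - l).
  apply: closed_cvg kcl => //; near=> n.
  by have [_ Kk _] := approx (phi n); exact: Kadd.
by exists l => //; exists (z - l) => //; rewrite addrC subrK.
Unshelve. all: by end_near.
Qed.

End ConeSum.

Section Contraction.
Context {R : realType} {V : normedModType R}.

Lemma dist_convex_comb_le (z w w' d : V) (l c : R) :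
  0 <= l <= 1 -> 0 <= c -> `|d| <= 1 ->
  l *: z + (1 - l) *: w = w' + c *: d ->
  `|z - w'| <= (1 - l) * `|z - w| + c.
Proof.
move=> /andP[l0 l1] c0 d1 E.
have -> : z - w' = (1 - l) *: (z - w) + c *: d.
  apply/eqP; rewrite subr_eq -addrA (addrC (c *: d)) -E scalerBr addrA.
  by rewrite addrAC subrK -scalerDl subrK scale1r.
apply: le_trans (ler_normD _ _) _; rewrite !normrZ !ger0_norm ?subr_ge0 //.
by rewrite lerD2l -[leRHS]mulr1 ler_wpM2l.
Qed.

Lemma contraction_approx {S : set V} {z w0 : V} {l r : R} :
  0 < l -> l < 1 -> 0 <= r -> S w0 ->
  (forall w, S w -> exists2 w', S w' & `|z - w'| <= (1 - l) * `|z - w| + l * r) ->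
  forall e, r < e -> exists2 w, S w & `|z - w| < e.
Proof.
move=> l0 l1 r0 Sw0 step e re.
have iter n : exists2 w, S w & `|z - w| <= r + (1 - l) ^+ n * `|z - w0|.
  elim: n => [|n [w Sw zw]]; first by exists w0; rewrite // expr0 mul1r lerDr.
  have [w' Sw' zw'] := step w Sw; exists w' => //; apply: le_trans zw' _.
  have : (1 - l) * `|z - w| <= (1 - l) * (r + (1 - l) ^+ n * `|z - w0|).
    by rewrite ler_wpM2l // subr_ge0 ltW.
  rewrite exprS -mulrA; lra.
have q0 : (1 - l) ^+ n * `|z - w0| @[n --> \oo] --> 0.
  rewrite -(mul0r `|z - w0|); apply: cvgM; last exact: cvg_cst.
  apply: cvg_expr.
  by rewrite ger0_norm ?subr_ge0 ?(ltW l1) // ltrBlDr ltrDl.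
have er : 0 < e - r by rewrite subr_gt0.
have [N _ qN] := (cvgrPdist_lt _ _).1 q0 _ er.
have [w Sw zw] := iter N; exists w => //; apply: le_lt_trans zw _.
have := qN N (leqnn N); rewrite sub0r normrN => /(le_lt_trans (ler_norm _)).
lra.
Qed.

End Contraction.

Section FrechetSubdifferential.
Context {R : realType} {X Y : normedModType R} {K : set Y}.
Context {F : X -> set Y} {xbar : X}.
Hypothesis coneK : pointed_closed_convex_cone K.

Lemma inclusion_frechet_subdiff (T : X -> Y) :
  (forall x, F x `<=` mink_sum (set_transl (F xbar) (T (x - xbar))) K) ->
  frechet_subdiff K F xbar T.
Proof.
case: coneK => _ _ Kadd _ _ FT eps eps0; exists 1 => // x _ _ [y Fy [k Kk <-]].
have [_ [a Fa <-] [k' Kk' <-]] := FT x y Fy.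
exists (a + (k' + k) + T (x - xbar)).
  by exists (a + (k' + k)) => //; exists a => //; exists (k' + k) => //; exact: Kadd.
exists 0; first by exists 0; rewrite ?scaler0 // /cball1 /= normr0.
by rewrite addr0 addrAC addrA.
Qed.

Context {T : {linear X -> Y}}.

Lemma frechet_convex_step (eps delta l : R) (x : X) (y w : Y) :
  upper_K_convex K F -> 0 <= eps -> 0 < l -> l < 1 -> l * `|x - xbar| < delta ->
  (forall x', `|x' - xbar| < delta -> mink_sum (F x') K `<=`
     mink_sum (set_transl (mink_sum (F xbar) K) (T (x' - xbar)))
              (set_scale (eps * `|x' - xbar|) (@cball1 R Y))) ->
  F x y -> mink_sum (F xbar) K w ->
  exists2 w', mink_sum (F xbar) K w' &
    `|y - T (x - xbar) - w'|
      <= (1 - l) * `|y - T (x - xbar) - w| + l * (eps * `|x - xbar|).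
Proof.
case: coneK => _ Kscale Kadd _ _ Fconv eps0 l0 l1 lh Tdelta Fy [a Fa [k Kk <-]].
set h := x - xbar; set x' := l *: x + (1 - l) *: xbar.
have x'h : x' - xbar = l *: h by rewrite /x' scalerBr scalerBl scale1r addrA addrAC addrK.
have [f Ff [k1 Kk1 fk1]] : mink_sum (F x') K (l *: y + (1 - l) *: a).
  by apply: Fconv => //; exists (l *: y); [exists y | exists ((1 - l) *: a); [exists a|]].
have Fx'w : mink_sum (F x') K (f + (k1 + (1 - l) *: k)).
  exists f => //; exists (k1 + (1 - l) *: k) => //.
  by apply: Kadd => //; apply: Kscale; rewrite // subr_ge0 ltW.
have x'delta : `|x' - xbar| < delta by rewrite x'h normrZ gtr0_norm.
have [_ [w' Sw' <-] [_ [d d1 <-]]] := Tdelta x' x'delta _ Fx'w.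
rewrite x'h linearZ normrZ gtr0_norm // => Ew.
have l01 : 0 <= l <= 1 by rewrite !ltW.
have c0 : 0 <= l * (eps * `|h|).
  apply: mulr_ge0; [exact: ltW | exact: mulr_ge0].
exists w' => //; apply: dist_convex_comb_le l01 c0 d1 _.
apply: (addIr (l *: T h)); rewrite addrAC scalerBr subrK.
by rewrite scalerDr addrA -fk1 -addrA -Ew mulrCA addrAC.
Qed.

Lemma frechet_subdiff_inclusion :
  upper_K_convex K F -> K_seq_compact K (F xbar) -> frechet_subdiff K F xbar T ->
  forall x, F x `<=` mink_sum (set_transl (F xbar) (T (x - xbar))) K.
Proof.
move=> Fconv Fcomp Tsub x y Fy; set h := x - xbar; set z := y - T h.
suff [a Fa [k Kk akz]] : mink_sum (F xbar) K z.
  by exists (a + T h); [exists a | exists k; rewrite // addrAC akz subrK].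
apply: (K_seq_compact_K_closed coneK Fcomp).
move=> B /nbhs_ballP[e /= e0 zeB].
have [a0 Fa0] := Fcomp.1.
have Sa0 : mink_sum (F xbar) K (a0 + 0) by exists a0 => //; exists 0; case: coneK.
have h1 : 0 < `|h| + 1 by rewrite ltr_wpDl.
pose eps := e / (2 * (`|h| + 1)).
have eps0 : 0 < eps by rewrite divr_gt0 ?mulr_gt0.
have [delta delta0 Tdelta] := Tsub eps eps0.
pose l := delta / (delta + `|h| + 1).
have dh1 : 0 < delta + `|h| + 1 by rewrite -addrA addr_gt0.
have l0 : 0 < l by rewrite divr_gt0.
have l1 : l < 1 by rewrite ltr_pdivrMr // mul1r -addrA ltrDl.
have lh : l * `|h| < delta.
  by rewrite mulrAC ltr_pdivrMr // ltr_pM2l //; lra.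
have r_lt_e : eps * `|h| < e.
  rewrite mulrAC ltr_pdivrMr ?mulr_gt0 // ltr_pM2l //; lra.
have step w : mink_sum (F xbar) K w -> exists2 w', mink_sum (F xbar) K w' &
    `|z - w'| <= (1 - l) * `|z - w| + l * (eps * `|h|).
  exact: frechet_convex_step Fconv (ltW eps0) l0 l1 lh Tdelta Fy.
have r0 : 0 <= eps * `|h| := mulr_ge0 (ltW eps0) (normr_ge0 h).
have [w Sw zw] := contraction_approx l0 l1 r0 Sa0 step _ r_lt_e.
by exists w; split=> //; apply: zeB; rewrite /= -ball_normE.
Qed.

End FrechetSubdifferential.

Theorem mainTheorem4 (R : realType) (X Y : normedModType R) (K : set Y)
    (F : X -> set Y) (xbar : X) :
  pointed_closed_convex_cone K ->
  (forall x, F x !=set0) ->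
  upper_K_convex K F ->
  K_seq_compact K (F xbar) ->
  K_closed K (@cball1 R Y) ->
  forall T : {linear X -> Y}, continuous T ->
    (frechet_subdiff K F xbar T <->
     forall x, F x `<=` mink_sum (set_transl (F xbar) (T (x - xbar))) K).
Proof.
move=> coneK _ Fconv Fcomp _ T _; split.
  exact: frechet_subdiff_inclusion.
exact: inclusion_frechet_subdiff.
Qed.
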